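(* Let $d\ge 1$, $\sigma>0$, and let $A_0,A_1\in\mathbb{R}^{d\times d}$ be constant matrices (not assumed to commute). Then the function $Z$ defined in the context (restricted to $[-\sigma,\infty)$) is the unique solution of the initial value problem \[ \dot Z(\vartheta)=A_0Z(\vartheta-\sigma)+Z(\vartheta-\sigma)A_1,\ \ \vartheta\in[0,\infty),\qquad Z(\vartheta)=I,\ \ \vartheta\in[-\sigma,0]. \]
   Context: $\Theta$ and $I$ denote the $d\times d$ zero and identity matrices. Define matrices $Q_{r+1}(r\sigma)$, $r=0,1,2,\dots$, recursively by $Q_1(0)=I$ and $Q_{r+1}(r\sigma)=A_0Q_r((r-1)\sigma)+Q_r((r-1)\sigma)A_1$ for $r\ge 1$. Define $Z:\mathbb{R}\to\mathbb{R}^{d\times d}$ by $Z(\vartheta)=\Theta$ for $\vartheta<-\sigma$, and, for each integer $u\ge 0$ and $\vartheta\in[(u-1)\sigma,u\sigma)$, \[ Z(\vartheta)=\sum_{r=0}^{u}Q_{r+1}(r\sigma)\frac{(\vartheta-(r-1)\sigma)^r}{r!}. \] *)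

From HB Require Import structures.
From mathcomp Require Import all_boot all_order all_algebra.
From mathcomp Require Import all_classical all_reals all_analysis.
Set Implicit Arguments. Unset Strict Implicit. Unset Printing Implicit Defensive.
Import Order.TTheory GRing.Theory Num.Theory.
Import numFieldNormedType.Exports.
Local Open Scope classical_set_scope.
Local Open Scope ring_scope.

(* Q r stands for Q_{r+1}(r sigma): Q_1(0) = I,
   Q_{r+1}(r sigma) = A0 Q_r((r-1)sigma) + Q_r((r-1)sigma) A1. *)
Fixpoint Qmx (R : realType) (d : nat) (A0 A1 : 'M[R]_d) (r : nat) : 'M[R]_d :=
  match r with
  | 0%N => 1%:M
  | r'.+1 => A0 *m Qmx A0 A1 r' + Qmx A0 A1 r' *m A1
  end.

Definition Zmx (R : realType) (d : nat) (sigma : R) (A0 A1 : 'M[R]_d) (t : R)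
  : 'M[R]_d :=
  if t < - sigma then 0
  else let u := absz (Num.floor (t / sigma) + 1) in
       \sum_(r < u.+1)
         (((t - (r%:R - 1) * sigma) ^+ r) / (r`!)%:R) *: Qmx A0 A1 r.

(* With D = [0, +oo) this is the usual derivative for t > 0 and the
   right derivative at t = 0. *)
Definition is_deriv_within (R : realType) (V : normedModType R)
  (D : set R) (f : R -> V) (t : R) (f' : V) : Prop :=
  (fun h : R => h^-1 *: (f (t + h) - f t))
    @ within (fun h : R => h != 0 /\ D (t + h)) (nbhs (0 : R)) --> f'.

Definition solves_IVP (R : realType) (d : nat) (sigma : R) (A0 A1 : 'M[R]_d)
  (X : R -> 'M[R]_d) : Prop :=
  (forall t : R, 0 <= t ->
     is_deriv_within [set s : R | 0 <= s] X t
       (A0 *m X (t - sigma) + X (t - sigma) *m A1)) /\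
  (forall t : R, - sigma <= t <= 0 -> X t = 1%:M).

From HB Require Import structures.
From mathcomp Require Import all_boot all_order all_algebra.
From mathcomp Require Import all_classical all_reals all_analysis.
From mathcomp Require Import ring lra zify.
Import Order.TTheory GRing.Theory Num.Theory.
Import numFieldNormedType.Exports.
Local Open Scope classical_set_scope.
Local Open Scope ring_scope.

(* Write Z(t) as sum_r p_r(t) Q_{r+1}(r sigma) with the truncated powers
   p_r(t) = ((t - (r-1) sigma)_+)^r / r!; with enough terms this holds on all
   of [-sigma, oo), not only on the interval where the floor in the definition
   of Z selects the number of terms.  Now p_0 = 1 there and p_{r+1}' is p_r
   delayed by sigma, so differentiating termwise and regrouping with
   Q_{r+2} = A0 Q_{r+1} + Q_{r+1} A1 gives
   Z' = A0 Z(. - sigma) + Z(. - sigma) A1.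
   Uniqueness is the method of steps: if a solution X agrees with Z on
   [-sigma, n sigma), then X - Z has zero derivative on [0, (n+1) sigma) and
   vanishes at 0. *)

Section DerivWithin.
Context {R : realType} {V : normedModType R}.
Implicit Types (D : set R) (f g : R -> V) (t : R) (L : V).

Lemma is_deriv_withinP D f t L :
  is_deriv_within D f t L <->
  forall e, 0 < e -> exists2 r, 0 < r & forall h, `|h| < r -> h != 0 ->
    D (t + h) -> `|L - h^-1 *: (f (t + h) - f t)| < e.
Proof.
rewrite /is_deriv_within cvgrPdist_lt; split=> fL e e0.
  have := fL e e0; rewrite near_withinE => /nbhs_normP[r r0 Hr].
  by exists r => // h hr h0 Dh; apply: (Hr h) => //=; rewrite sub0r normrN.
have [r r0 Hr] := fL e e0; rewrite near_withinE; apply/nbhs_normP.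
by exists r => //= h; rewrite /ball_ /= sub0r normrN => hr [h0 Dh]; apply: Hr.
Qed.

Lemma is_deriv_within_eq_near D f g t L e : 0 < e -> f t = g t ->
  (forall s, `|s - t| < e -> D s -> f s = g s) ->
  is_deriv_within D f t L -> is_deriv_within D g t L.
Proof.
move=> e0 fgt fg /is_deriv_withinP fL; apply/is_deriv_withinP => e' e'0.
have [r r0 Hr] := fL e' e'0.
exists (Num.min r e) => [|h]; first by rewrite lt_min r0 e0.
rewrite lt_min => /andP[hr he] h0 Dh.
have fgh : f (t + h) = g (t + h) by apply: fg; rewrite // [t + h]addrC addrK.
by rewrite -fgt -fgh; apply: Hr.
Qed.

Lemma is_deriv_within_glue D f g h t L :
  (forall s, t <= s -> f s = g s) -> (forall s, s <= t -> f s = h s) ->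
  is_deriv_within D g t L -> is_deriv_within D h t L ->
  is_deriv_within D f t L.
Proof.
move=> fg fh /is_deriv_withinP gL /is_deriv_withinP hL.
apply/is_deriv_withinP => e e0.
have [rg rg0 Hg] := gL e e0; have [rh rh0 Hh] := hL e e0.
exists (Num.min rg rh) => [|k]; first by rewrite lt_min rg0 rh0.
rewrite lt_min => /andP[kg kh] k0 Dk.
have [k_ge0|k_lt0] := leP 0 k.
  by rewrite !fg ?lexx ?lerDl //; apply: Hg.
by rewrite !fh ?lexx ?gerDl ?ltW //; apply: Hh.
Qed.

Lemma is_deriv_within_cst D (M : V) t : is_deriv_within D (fun=> M) t 0.
Proof.
rewrite /is_deriv_within.
under eq_fun do rewrite subrr scaler0.
exact: cvg_cst.
Qed.

Lemma is_deriv_withinD [D f g t Lf Lg] :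
  is_deriv_within D f t Lf -> is_deriv_within D g t Lg ->
  is_deriv_within D (fun s => f s + g s) t (Lf + Lg).
Proof.
rewrite /is_deriv_within => fL gL.
under eq_fun do rewrite opprD addrACA scalerDr.
exact: cvgD.
Qed.

Lemma is_deriv_withinB [D f g t Lf Lg] :
  is_deriv_within D f t Lf -> is_deriv_within D g t Lg ->
  is_deriv_within D (fun s => f s - g s) t (Lf - Lg).
Proof.
rewrite /is_deriv_within => fL gL.
under eq_fun do rewrite opprD addrACA -opprD scalerBr.
exact: cvgB.
Qed.

Lemma is_deriv_withinZl [D] [c : R -> R] (M : V) [t l] :
  is_deriv_within D c t l -> is_deriv_within D (fun s => c s *: M) t (l *: M).
Proof.
rewrite /is_deriv_within => cl.
under eq_fun do rewrite -scalerBl scalerA.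
exact: cvgZr_tmp.
Qed.

Lemma is_deriv_within_sum D n (f : nat -> R -> V) t (L : nat -> V) :
  (forall i, (i < n)%N -> is_deriv_within D (f i) t (L i)) ->
  is_deriv_within D (fun s => \sum_(i < n) f i s) t (\sum_(i < n) L i).
Proof.
elim: n => [|n IHn] fL.
  under eq_fun do rewrite big_ord0.
  rewrite big_ord0; exact: is_deriv_within_cst.
under eq_fun do rewrite big_ord_recr.
rewrite big_ord_recr.
apply: (@is_deriv_withinD D (fun s => \sum_(i < n) f i s)); last exact: fL.
by apply: IHn => i ilt; apply: fL; apply: ltnW.
Qed.

Lemma is_derive_within D f t L :
  is_derive t 1 f L -> is_deriv_within D f t L.
Proof.
case=> /cvgrPdist_lt fL <-; apply/is_deriv_withinP => e e0.
have := fL e e0; rewrite near_withinE => /nbhs_normP[r r0 Hr].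
exists r => // h hr h0 _; move: (Hr h); rewrite /ball_ /= sub0r normrN.
by rewrite /= [_%:A]mulr1 [h + t]addrC; apply.
Qed.

Lemma is_deriv_within_is_derive D f t L e : 0 < e ->
  (forall s, `|s - t| < e -> D s) ->
  is_deriv_within D f t L -> is_derive t 1 f L.
Proof.
move=> e0 De /is_deriv_withinP fL.
have cvgL : (fun h => h^-1 *: ((f \o shift t) (h *: 1) - f t)) @ 0^' --> L.
  apply/cvgrPdist_lt => e' e'0; have [r r0 Hr] := fL e' e'0.
  rewrite near_withinE; apply/nbhs_normP; exists (Num.min r e).
    by rewrite /= lt_min r0 e0.
  move=> h; rewrite /ball_ /= sub0r normrN lt_min => /andP[hr he] h0.
  rewrite /= [_%:A]mulr1 [h + t]addrC; apply: Hr => //.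
  by apply: De; rewrite [t + h]addrC addrK.
have fdv : derivable f t 1 by apply/cvg_ex; exists L.
by apply: DeriveDef => //; apply: cvg_lim cvgL.
Qed.

Lemma is_deriv_within_cont [D f t L] : is_deriv_within D f t L ->
  forall e, 0 < e -> exists2 r, 0 < r &
    forall s, `|t - s| < r -> D s -> `|f t - f s| < e.
Proof.
move=> /is_deriv_withinP fL e e0.
have [r r0 Hr] := fL 1 ltr01.
have L1_gt0 : 0 < `|L| + 1 by rewrite ltr_wpDl.
exists (Num.min r (e / (`|L| + 1))); first by rewrite lt_min r0 divr_gt0.
move=> s; rewrite lt_min => /andP[sr se] Ds.
have [->|st] := eqVneq s t; first by rewrite subrr normr0.
set h := s - t; set q := h^-1 *: (f s - f t).
have hN : `|h| = `|t - s| by rewrite distrC.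
have h0 : h != 0 by rewrite subr_eq0.
have th : t + h = s by rewrite addrC subrK.
have Lq : `|L - q| < 1 by move: (Hr h); rewrite hN th; apply.
have q_le : `|q| <= `|L| + 1.
  rewrite -[q](subKr L); apply: le_trans (ler_normB _ _) _; lra.
have -> : f t - f s = - (h *: q) by rewrite scalerA mulfV // scale1r opprB.
rewrite normrN normrZ; apply: le_lt_trans (ler_wpM2l _ q_le) _ => //.
by rewrite hN -ltr_pdivlMr.
Qed.

End DerivWithin.

Lemma is_deriv_within_mx_entry {R : realType} [m n D] [F : R -> 'M[R]_(m, n)]
    [t L] i j :
  is_deriv_within D F t L -> is_deriv_within D (fun s => F s i j) t (L i j).
Proof.
rewrite /is_deriv_within => FL.
have -> : (fun h : R => h^-1 *: (F (t + h) i j - F t i j)) =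
    (fun M : 'M[R]_(m, n) => M i j) \o (fun h => h^-1 *: (F (t + h) - F t)).
  by apply/funext => h; rewrite /= !mxE.
by apply: cvg_comp FL _; apply: coord_continuous.
Qed.

Section OnInterval.
Context {R : realType} (D : set R) {a c : R}.
Hypotheses (ac : a < c) (Dac : forall s, a <= s <= c -> D s).

Lemma is_deriv_within_itv_is_derive {V : normedModType R} [f : R -> V] [x L] :
  x \in `]a, c[ -> is_deriv_within D f x L -> is_derive x 1 f L.
Proof.
rewrite in_itv /= => /andP[ax xc].
apply: (@is_deriv_within_is_derive _ _ D _ _ _ (Num.min (x - a) (c - x))).
  by rewrite lt_min !subr_gt0 ax xc.
move=> s; rewrite lt_min !ltr_distl => /andP[/andP[? ?] /andP[? ?]].
by apply: Dac; lra.
Qed.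

Lemma is_deriv_within_itv_continuous [f f' : R -> R] :
  (forall s, a <= s <= c -> is_deriv_within D f s (f' s)) ->
  {within `[a, c], continuous f}.
Proof.
move=> f'D.
have cont_at s : a <= s <= c -> forall e, 0 < e -> exists2 r, 0 < r &
    forall y, `|s - y| < r -> a <= y <= c -> `|f s - f y| < e.
  move=> sac e e0; have [r r0 Hr] := is_deriv_within_cont (f'D s sac) e e0.
  by exists r => // y sy yac; apply: Hr => //; apply: Dac.
apply/continuous_within_itvP => //; split.
- move=> x xac; apply/differentiable_continuous/derivable1_diffP.
  have /andP[ax xc] : a < x < c by rewrite in_itv /= in xac.
  by have [] := is_deriv_within_itv_is_derive xac (f'D x _); rewrite ?ltW.
- apply/cvgrPdist_lt => e e0.
  have [|r r0 Hr] := cont_at a _ e e0; first by rewrite lexx ltW.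
  rewrite near_withinE; apply/nbhs_normP; exists (Num.min r (c - a)).
    by rewrite /= lt_min r0 subr_gt0.
  move=> y /=; rewrite /ball_ /= lt_min => /andP[yr]; rewrite ltr_distl.
  by move=> /andP[? ?] ay; apply: Hr => //; lra.
- apply/cvgrPdist_lt => e e0.
  have [|r r0 Hr] := cont_at c _ e e0; first by rewrite lexx ltW.
  rewrite near_withinE; apply/nbhs_normP; exists (Num.min r (c - a)).
    by rewrite /= lt_min r0 subr_gt0.
  move=> y /=; rewrite /ball_ /= lt_min => /andP[yr]; rewrite ltr_distl.
  by move=> /andP[? ?] yc; apply: Hr => //; lra.
Qed.

Lemma is_deriv_within_itv_eq0_cst (f : R -> R) :
  (forall s, a <= s <= c -> is_deriv_within D f s 0) -> f c = f a.
Proof.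
move=> f'0; have fcont := is_deriv_within_itv_continuous f'0.
have f'0_oo x : x \in `]a, c[ -> is_derive x 1 f 0.
  move=> xac; have /andP[ax xc] : a < x < c by rewrite in_itv /= in xac.
  by apply: (is_deriv_within_itv_is_derive xac); apply: f'0; rewrite !ltW.
have fdv x : x \in `]a, c[ -> derivable f x 1 by move/f'0_oo => [].
have f'_eq0 x : x \in `]a, c[ -> (f^`())%classic x = 0.
  by move/f'0_oo => [_ f'x]; rewrite derive1E f'x.
have f'_ge0 x : x \in `]a, c[ -> 0 <= (f^`())%classic x by move/f'_eq0 ->.
have f'_le0 x : x \in `]a, c[ -> (f^`())%classic x <= 0 by move/f'_eq0 ->.
have f_ge := ger0_derive1_le_cc fdv f'_ge0 fcont.
have f_le := ler0_derive1_le_cc fdv f'_le0 fcont.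
have [aI cI] : a \in `[a, c] /\ c \in `[a, c] by rewrite !in_itv /= !lexx ltW.
by apply/le_anti; rewrite f_le ?f_ge ?ltW.
Qed.

End OnInterval.

Section TruncatedPower.
Context {R : realType}.

Definition tpow (a : R) (n : nat) (s : R) : R :=
  if a <= s then (s - a) ^+ n / n`!%:R else 0.

Lemma tpow_shift a b n s : tpow a n (s - b) = tpow (a + b) n s.
Proof. by rewrite /tpow lerBrDr opprD addrA [_ - b - a]addrAC. Qed.

Lemma tpow0 a s : a <= s -> tpow a 0 s = 1.
Proof. by move=> as_; rewrite /tpow as_ expr0 fact0 divr1. Qed.

Lemma is_derive_shifted_pow (a : R) n (t : R) :
  is_derive t 1 (fun s => (s - a) ^+ n.+1 / n.+1`!%:R) ((t - a) ^+ n / n`!%:R).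
Proof.
have da : is_derive t 1 (id - cst a : R -> R) 1.
  by apply: is_derive_eq; rewrite subr0.
have -> : (fun s => (s - a) ^+ n.+1 / n.+1`!%:R) =
    (id - cst a) ^+ n.+1 * cst n.+1`!%:R^-1.
  by apply/funext => s; rewrite !fctE.
apply: is_derive_eq (is_deriveM (is_deriveX n.+1 da) (is_derive_cst _ t 1)) _.
have fact_neq0 : n`!%:R != 0 :> R by rewrite pnatr_eq0 -lt0n fact_gt0.
rewrite scaler0 add0r !fctE /= [_%:A]mulr1 factS natrM /GRing.scale /=.
by field; rewrite fact_neq0 addrC natr1 pnatr_eq0.
Qed.

Lemma is_deriv_within_tpowSS D a n t :
  is_deriv_within D (tpow a n.+2) t (tpow a n.+1 t).
Proof.
have [at_|ta|<-] := ltgtP a t.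
- apply: (@is_deriv_within_eq_near _ _ D
    (fun s => (s - a) ^+ n.+2 / n.+2`!%:R) _ _ _ (t - a)).
  + by rewrite subr_gt0.
  + by rewrite /tpow ltW.
  + by move=> s; rewrite ltr_distl => /andP[? _] _; rewrite /tpow ifT //; lra.
  rewrite /tpow ltW //; apply: is_derive_within; exact: is_derive_shifted_pow.
- apply: (@is_deriv_within_eq_near _ _ D (fun=> 0) _ _ _ (a - t)).
  + by rewrite subr_gt0.
  + by rewrite /tpow leNgt ta.
  + move=> s; rewrite ltr_distl => /andP[_ ?] _.
    have sa : s < a by lra.
    by rewrite /tpow leNgt sa.
  by rewrite /tpow leNgt ta; apply: is_deriv_within_cst.
- (* At [t = a] both branches are flat; this is where [n.+2 >= 2] is used. *)
  apply: (@is_deriv_within_glue _ _ D _ (fun s => (s - a) ^+ n.+2 / n.+2`!%:R)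
    (fun=> 0)).
  + by move=> s as_; rewrite /tpow as_.
  + move=> s; rewrite le_eqVlt => /predU1P[->|sa]; rewrite /tpow.
      by rewrite lexx subrr expr0n mul0r.
    by rewrite leNgt sa.
  + by rewrite /tpow lexx; apply/is_derive_within/is_derive_shifted_pow.
  by rewrite /tpow lexx subrr expr0n mul0r; apply: is_deriv_within_cst.
Qed.

End TruncatedPower.

Lemma exists_nat_mul_gt {R : archiFieldType} (x : R) [y : R] :
  0 < y -> exists n : nat, x < n%:R * y.
Proof.
move=> y_gt0; exists (Num.Def.archi_bound (`|x| / y)).
rewrite -ltr_pdivrMr //; apply: le_lt_trans (archi_boundP _).
  by rewrite ler_pM2r ?invr_gt0 // ler_norm.
by rewrite divr_ge0 // ltW.
Qed.

Section DelayedMatrixExponential.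
Context {R : realType} {d : nat} {sigma : R} {A0 A1 : 'M[R]_d}.
Hypothesis sigma_gt0 : 0 < sigma.

Local Notation Z := (Zmx sigma A0 A1).
Local Notation Q := (Qmx A0 A1).
Local Notation D0 := [set s : R | 0 <= s].
Local Notation term r := (tpow ((r%:R - 1) * sigma) r).

Lemma Zmx_tpow_sum N s : - sigma <= s -> s < N%:R * sigma ->
  Z s = \sum_(r < N.+1) term r s *: Q r.
Proof.
move=> s_ge s_lt; rewrite /Zmx ltNge s_ge /=.
set z := Num.floor (s / sigma); set u := absz (z + 1).
have z_ge : -1 <= z by rewrite floor_ge_int ler_pdivlMr // mulN1r.
have uE : u%:R = z%:~R + 1 :> R by rewrite natr_absz ger0_norm ?intrD //; lia.
have u_le : (u%:R - 1) * sigma <= s by rewrite uE addrK -ler_pdivlMr ?floor_le.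
have u_gt : s < u%:R * sigma.
  by rewrite -ltr_pdivrMr // uE -intrD1 -floor_lt_int ltzD1.
have uN : (u <= N)%N.
  rewrite leqNgt; apply/negP => Nu.
  have : N.+1%:R <= u%:R :> R by rewrite ler_nat.
  rewrite -natr1 => ?; nra.
rewrite -(big_mkord xpredT (fun r => term r s *: Q r)).
rewrite -(big_mkord xpredT
  (fun r => ((s - (r%:R - 1) * sigma) ^+ r / r`!%:R) *: Q r)).
rewrite [RHS](big_cat_nat _ (n := u.+1)) //= [X in _ = _ + X]big_nat_cond.
rewrite [X in _ = _ + X]big1 ?addr0 => [|r /andP[/andP[ur _] _]].
  apply: eq_big_nat => r /andP[_ ru]; rewrite /tpow ifT //.
  have : r%:R <= u%:R :> R by rewrite ler_nat.
  move=> ?; nra.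
rewrite /tpow ifF ?scale0r //; apply/negbTE; rewrite -ltNge.
have : u.+1%:R <= r%:R :> R by rewrite ler_nat.
rewrite -natr1 => ?; nra.
Qed.

Lemma Zmx_init t : - sigma <= t <= 0 -> Z t = 1%:M.
Proof.
move=> /andP[t_ge t_le0].
rewrite (@Zmx_tpow_sum 1) // ?mul1r; last by have := sigma_gt0; lra.
rewrite !big_ord_recr big_ord0 /= add0r tpow0 ?mul0r ?sub0r ?mulN1r // scale1r.
rewrite /tpow subrr mul0r; case: ifP => [t_ge0|_]; last first.
  by rewrite scale0r addr0.
have -> : t = 0 by lra.
by rewrite subrr expr0n mul0r scale0r addr0.
Qed.

Lemma is_deriv_within_term0 t : 0 <= t -> is_deriv_within D0 (term 0) t 0.
Proof.
move=> t_ge0; have := sigma_gt0; rewrite sub0r mulN1r => ?.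
apply: (@is_deriv_within_eq_near _ _ D0 (fun=> 1 : R) _ _ _ _ ltr01).
- by rewrite tpow0 //; lra.
- by move=> s _ /= s_ge0; rewrite tpow0 //; lra.
exact: is_deriv_within_cst.
Qed.

Lemma is_deriv_within_termS r t : 0 <= t ->
  is_deriv_within D0 (term r.+1) t (term r (t - sigma)).
Proof.
move=> t_ge0; rewrite tpow_shift -natr1 addrK.
have -> : (r%:R - 1) * sigma + sigma = r%:R * sigma by ring.
case: r => [|r]; last exact: is_deriv_within_tpowSS.
(* [tpow 0 1] has a corner at 0: only its derivative within [D0] exists. *)
rewrite mul0r tpow0 //.
apply: (@is_deriv_within_eq_near _ _ D0 (fun s => (s - 0) ^+ 1 / 1`!%:R)
  _ _ _ _ ltr01).
- by rewrite /tpow t_ge0.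
- by move=> s _ /= s_ge0; rewrite /tpow s_ge0.
apply: is_derive_within; apply: is_derive_eq (is_derive_shifted_pow 0 0 t) _.
by rewrite expr0 fact0 divr1.
Qed.

Lemma Zmx_deriv t : 0 <= t ->
  is_deriv_within D0 Z t (A0 *m Z (t - sigma) + Z (t - sigma) *m A1).
Proof.
move=> t_ge0; have := sigma_gt0 => ?.
have [N t_lt] := exists_nat_mul_gt t sigma_gt0.
have -> : A0 *m Z (t - sigma) + Z (t - sigma) *m A1 =
    0 *: Q 0 + \sum_(r < N.+1) term r (t - sigma) *: Q r.+1.
  rewrite scale0r add0r (@Zmx_tpow_sum N); [|lra|lra].
  rewrite mulmx_sumr mulmx_suml -big_split; apply: eq_bigr => r _ /=.
  by rewrite scalerDr scalemxAr scalemxAl.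
apply: (@is_deriv_within_eq_near _ _ D0
  (fun s => \sum_(r < N.+2) term r s *: Q r) _ _ _ sigma) => //.
- by rewrite (@Zmx_tpow_sum N.+1) //; rewrite -?natr1; lra.
- move=> s; rewrite ltr_distl => /andP[_ ?] /= s_ge0.
  by rewrite (@Zmx_tpow_sum N.+1) //; rewrite -?natr1; lra.
have -> : (fun s => \sum_(r < N.+2) term r s *: Q r) =
    fun s => term 0 s *: Q 0 + \sum_(r < N.+1) term r.+1 s *: Q r.+1.
  by apply/funext => s; rewrite big_ord_recl; under eq_bigr do rewrite lift0.
apply: is_deriv_withinD.
  by apply: is_deriv_withinZl; apply: is_deriv_within_term0.
apply: (@is_deriv_within_sum _ _ _ _ (fun r s => term r.+1 s *: Q r.+1) _
  (fun r => term r (t - sigma) *: Q r.+1)).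
by move=> r _; apply/is_deriv_withinZl/is_deriv_within_termS.
Qed.

Lemma solves_IVP_Zmx : solves_IVP sigma A0 A1 Z.
Proof. by split=> [t|t]; [apply: Zmx_deriv | apply: Zmx_init]. Qed.

Lemma solves_IVP_eq_Zmx [X] : solves_IVP sigma A0 A1 X ->
  forall n t, - sigma <= t -> t < n%:R * sigma -> X t = Z t.
Proof.
move=> [X' X_init]; have := sigma_gt0 => ?.
elim=> [|n IHn] t t_ge t_lt.
  by rewrite X_init ?Zmx_init // t_ge ltW // -(mul0r sigma).
have [t_le0|t_gt0] := lerP t 0; first by rewrite X_init ?Zmx_init // t_ge.
have XZ'0 s : 0 <= s <= t -> is_deriv_within D0 (fun s => X s - Z s) s 0.
  move=> /andP[s_ge0 s_le].
  have XZ : X (s - sigma) = Z (s - sigma).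
    by apply: IHn; move: t_lt; rewrite -?natr1; lra.
  have := is_deriv_withinB (X' s s_ge0) (Zmx_deriv _ s_ge0).
  by rewrite XZ subrr.
have XZ0 : X 0 = Z 0 by rewrite X_init ?Zmx_init // lexx andbT oppr_le0 ltW.
apply/matrixP => i j.
pose XZij s := (X s - Z s) i j.
have : XZij t = XZij 0.
  apply: (is_deriv_within_itv_eq0_cst D0 t_gt0) => [s /andP[] //|s st].
  by have := is_deriv_within_mx_entry i j (XZ'0 s st); rewrite mxE.
by rewrite /XZij XZ0 subrr !mxE => /subr0_eq.
Qed.

End DelayedMatrixExponential.

Theorem theorem2 (R : realType) (d : nat) (hd : (1 <= d)%N) (sigma : R)
  (hsigma : 0 < sigma) (A0 A1 : 'M[R]_d) :
  solves_IVP sigma A0 A1 (Zmx sigma A0 A1) /\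
  (forall X : R -> 'M[R]_d, solves_IVP sigma A0 A1 X ->
     forall t : R, - sigma <= t -> X t = Zmx sigma A0 A1 t).
Proof.
split=> [|X solX t t_ge]; first exact: solves_IVP_Zmx.
have [n t_lt] := exists_nat_mul_gt t hsigma.
exact: (solves_IVP_eq_Zmx hsigma solX n).
Qed.
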